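(* Let $\Phi=(V,C)$ be a $k$-uniform CNF formula with $n=|V|$ variables in which each variable belongs to at most $d$ clauses, and let $Z$ be its number of satisfying assignments. For $\theta\ge0$ let $Z(\theta)=\sum_{X\in\{0,1\}^V}\exp(-\theta|F(X)|)$, where $F(X)\subseteq C$ is the set of clauses not satisfied by $X$. Given $\varepsilon>0$, let $\ell=nd\left\lceil\ln\frac{4nd}{\varepsilon}\right\rceil$ and $\theta_\ell=\frac{\ell}{dn}$. If $2^k\ge 2\mathrm{e}dk$, then $$Z\le Z(\theta_\ell)\le\exp\left(\frac\varepsilon2\right)Z.$$
   Context: A CNF formula is $k$-uniform if every clause contains exactly $k$ literals on distinct variables (never both $x$ and $\neg x$). *)

From HB Require Import structures.
From mathcomp Require Import all_boot all_order all_algebra.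
From mathcomp Require Import all_classical all_reals all_analysis.
Set Implicit Arguments. Unset Strict Implicit. Unset Printing Implicit Defensive.
Import Order.TTheory GRing.Theory Num.Theory.
Local Open Scope ring_scope.

(* A clause over the variable set V (a finType) is a finite function
   V -> option bool: [c v = None] means v does not occur in c, and
   [c v = Some b] means the literal on v occurs with sign b
   (Some true = x_v, Some false = ~ x_v).  In particular a clause has at
   most one literal per variable (never both x and ~x). *)
Definition clause (V : finType) := {ffun V -> option bool}.

Definition cnf (V : finType) := {set clause V}.

Definition cvars (V : finType) (c : clause V) : {set V} :=
  [set v | c v != None].

Definition k_uniform (V : finType) (k : nat) (C : cnf V) : Prop :=
  forall c, c \in C -> #|cvars c| = k.

Definition max_degree_le (V : finType) (d : nat) (C : cnf V) : Prop :=
  forall v : V, (#|[set c in C | v \in cvars c]| <= d)%N.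

Definition sat_clause (V : finType) (X : {ffun V -> bool}) (c : clause V) : bool :=
  [exists v, c v == Some (X v)].

Definition unsat_clauses (V : finType) (C : cnf V) (X : {ffun V -> bool}) : {set clause V} :=
  [set c in C | ~~ sat_clause X c].

Definition nsat (V : finType) (C : cnf V) : nat :=
  #|[set X : {ffun V -> bool} | [forall c in C, sat_clause X c]]|.

Definition Ztheta (R : realType) (V : finType) (C : cnf V) (theta : R) : R :=
  \sum_(X : {ffun V -> bool}) expR (- theta * (#|unsat_clauses C X|)%:R).

From HB Require Import structures.
From mathcomp Require Import all_boot all_order all_algebra.
From mathcomp Require Import all_classical all_reals all_analysis.
From mathcomp Require Import fintype finset lra.
Import Order.TTheory GRing.Theory Num.Theory.
Local Open Scope ring_scope.
Set Implicit Arguments. Unset Strict Implicit. Unset Printing Implicit Defensive.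

(* Write p = exp(-theta) and F(X) for the set of clauses violated by X. Then
   Z(theta) = sum_(S \subset C) p^|S| #{X | F(X) = S}, and #{X | F(X) = S} is at
   most the number of assignments satisfying C \ S. A counting form of the
   Lovasz local lemma, proved by induction on the clause set, shows that adding
   the clauses of S back to C \ S keeps at least a fraction 2^-|S| of these
   assignments. Hence Z(theta) <= (1 + 2p)^|C| Z <= exp(2p|C|) Z, and |C| <= nd
   together with p <= eps / (4nd) yields the factor exp(eps/2). *)

Section Resampling.
Variables (V : finType) (W : {set V}).
Implicit Types (X Y g : {ffun V -> bool}) (P : pred {ffun V -> bool}).

Lemma card_agree_off Y :
  (#|[set X : {ffun V -> bool} | [forall v in ~: W, X v == Y v]]| = 2 ^ #|W|)%N.
Proof.
pose F v : pred bool := if v \in W then predT else pred1 (Y v).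
have -> : #|[set X : {ffun V -> bool} | [forall v in ~: W, X v == Y v]]|
         = #|family F|.
  apply: eq_card => X; rewrite inE.
  by apply/forallP/familyP => XY v; move: (XY v); rewrite /F inE; case: (v \in W).
rewrite card_family foldrE big_map big_enum /= (bigID (mem W)) /=.
rewrite (eq_bigr (fun _ => 2)) => [|v vW]; last by rewrite /F vW card_bool.
rewrite prod_nat_const big1 ?muln1 // => v /negbTE vW.
by rewrite /F vW card1.
Qed.

Definition reset_on g X : {ffun V -> bool} :=
  [ffun v => if v \in W then g v else X v].

(* [reset_on g] maps {X | P X} onto {X | P X, X = g on W}, and each fibre
   consists of the 2^|W| assignments agreeing with its image off W. *)
Lemma card_agree_on P g :
  (forall X Y, {in ~: W, X =1 Y} -> P X = P Y) ->
  (2 ^ #|W| * #|[set X : {ffun V -> bool} | P X && [forall v in W, X v == g v]]| =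
   #|[set X : {ffun V -> bool} | P X]|)%N.
Proof.
move=> Poff.
set A := [set X | P X && _].
have resetP X : P (reset_on g X) = P X.
  by apply: Poff => v; rewrite inE ffunE => /negbTE ->.
have resetA X : P X -> reset_on g X \in A.
  move=> PX; rewrite inE resetP PX; apply/forallP => v; apply/implyP => vW.
  by rewrite ffunE vW.
rewrite -[RHS]sum1dep_card (partition_big (reset_on g) (mem A)) //=.
rewrite mulnC -sum_nat_const; apply: eq_bigr => Y.
rewrite inE => /andP [PY /forallP Yg].
rewrite sum1dep_card -(card_agree_off Y); apply: eq_card => X; rewrite !inE.
apply/forallP/andP => [XY|[_ /eqP <-] v]; last first.
  by apply/implyP; rewrite inE ffunE => /negbTE ->.
have resetXY : reset_on g X = Y.
  apply/ffunP => v; rewrite ffunE; case: ifP => vW.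
    by move: (Yg v); rewrite vW => /eqP.
  by move: (XY v); rewrite inE vW => /eqP.
by rewrite -resetP resetXY PY.
Qed.
End Resampling.

Section Clauses.
Variable V : finType.
Implicit Types (X Y : {ffun V -> bool}) (c : clause V) (T : cnf V).

Definition sat_cnf T X := [forall c in T, sat_clause X c].

Definition nsat_viol T c := #|[set X | sat_cnf T X && ~~ sat_clause X c]|.

Definition falsifier c : {ffun V -> bool} :=
  [ffun v => if c v is Some b then ~~ b else false].

Lemma sat_clause_agree c X Y :
  {in cvars c, X =1 Y} -> sat_clause X c = sat_clause Y c.
Proof.
suff imp X' Y' : {in cvars c, X' =1 Y'} -> sat_clause X' c -> sat_clause Y' c.
  by move=> XY; apply/idP/idP; apply: imp => // v /XY.
move=> XY /existsP [v /eqP cv]; apply/existsP; exists v.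
have vc : v \in cvars c by rewrite inE cv.
by rewrite -(XY v vc) cv.
Qed.

Lemma unsat_clauseE c X :
  ~~ sat_clause X c = [forall v in cvars c, X v == falsifier c v].
Proof.
rewrite negb_exists; apply: eq_forallb => v.
by rewrite inE ffunE; case: (c v) => [b|] //=; case: (X v); case: b.
Qed.

Lemma sat_cnfU1 c T X : sat_cnf (c |: T) X = sat_clause X c && sat_cnf T X.
Proof.
apply/forall_inP/andP => [sat_cT|[sat_c /forall_inP sat_T] c'].
  split; [|apply/forall_inP => c' c'T]; apply: sat_cT;
    by rewrite !inE ?eqxx ?c'T ?orbT.
by rewrite !inE => /orP [/eqP ->|/sat_T].
Qed.

Lemma nsat_setU1 c T : (nsat T = nsat (c |: T) + nsat_viol T c)%N.
Proof.
rewrite /nsat -(cardsID [set X | sat_clause X c]); congr (_ + _)%N.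
  by apply: eq_card => X; rewrite !inE andbC -sat_cnfU1.
by apply: eq_card => X; rewrite !inE andbC.
Qed.

Lemma nsat_viol_subset c T T' :
  T' \subset T -> (nsat_viol T c <= nsat_viol T' c)%N.
Proof.
move=> T'T; apply: subset_leq_card; apply/subsetP => X.
rewrite !inE => /andP [/forall_inP sat_T ->].
by rewrite andbT; apply/forall_inP => c' /(subsetP T'T) /sat_T.
Qed.

Lemma nsat_viol_indep c T :
  (forall c', c' \in T -> [disjoint cvars c' & cvars c]) ->
  (2 ^ #|cvars c| * nsat_viol T c = nsat T)%N.
Proof.
move=> Tc; rewrite /nsat.
rewrite -(card_agree_on (W := cvars c) (P := sat_cnf T) (falsifier c)); last first.
  move=> X Y XY; apply: eq_forallb_in => c' c'T; apply: sat_clause_agree => v vc'.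
  by apply: XY; rewrite inE (disjointFr (Tc c' c'T) vc').
by congr (_ * _)%N; apply: eq_card => X; rewrite !inE unsat_clauseE.
Qed.

Lemma unsat_clauses_sub (C : cnf V) X : unsat_clauses C X \subset C.
Proof. by apply/subsetP => c; rewrite inE => /andP []. Qed.

Lemma card_unsat_clauses_eq_le (C : cnf V) S :
  (#|[set X | unsat_clauses C X == S]| <= nsat (C :\: S))%N.
Proof.
apply: subset_leq_card; apply/subsetP => X; rewrite !inE => /eqP FX.
apply/forall_inP => c; rewrite inE => /andP [cS cC].
by apply: contraR cS => unsat_c; rewrite -FX inE cC.
Qed.

End Clauses.

Lemma card_cnf_meeting_le (V : finType) (d : nat) (C A : cnf V) (B : {set V}) :
  max_degree_le d C -> A \subset C ->
  (forall c, c \in A -> exists2 v, v \in B & v \in cvars c) ->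
  (#|A| <= #|B| * d)%N.
Proof.
move=> deg_le AC A_meets_B.
apply: (@leq_trans (\sum_(c in A) \sum_(v in B) (v \in cvars c : nat))).
  rewrite -sum1_card; apply: leq_sum => c cA; have [v vB vc] := A_meets_B c cA.
  by rewrite (bigD1 v) //= vc.
rewrite exchange_big /= -sum_nat_const; apply: leq_sum => v vB.
rewrite -big_mkcondr /= sum1_card; apply: leq_trans (deg_le v).
apply: subset_leq_card; apply/subsetP => c.
by rewrite unfold_in !inE => /andP [/(subsetP AC) -> ->].
Qed.

Lemma bernoulli_le (R : realDomainType) (x : R) n :
  x <= 1 -> 1 - n%:R * x <= (1 - x) ^+ n.
Proof.
move=> x_le1; elim: n => [|n IH]; first by rewrite mul0r subr0 expr0.
rewrite exprS -natr1; apply: le_trans (ler_wpM2l _ IH); last by rewrite subr_ge0.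
have : 0 <= n%:R * x ^+ 2 by rewrite mulr_ge0 // sqr_ge0.
lra.
Qed.

Lemma nsat_setU_ge (R : realFieldType) (V : finType) (x : R) (T U : cnf V) :
  x <= 1 -> [disjoint T & U] ->
  (forall (T' : cnf V) u, T' \subset T :|: U -> u \in U -> u \notin T' ->
     (nsat_viol T' u)%:R <= x * (nsat T')%:R) ->
  (1 - x) ^+ #|U| * (nsat T)%:R <= (nsat (T :|: U))%:R.
Proof.
move=> x_le1; move Un : #|U| => n; elim: n U Un => [|n IH] U Un TU viol_le.
  by rewrite (cards0_eq Un) setU0 expr0 mul1r.
have /card_gt0P [u uU] : (0 < #|U|)%N by rewrite Un.
have U'n : #|U :\ u| = n by move: Un; rewrite (cardsD1 u U) uU => -[].
have sub' : T :|: U :\ u \subset T :|: U by rewrite setUS // subD1set.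
have uTU' : u \notin T :|: U :\ u by rewrite !inE negb_or (disjointFl TU uU) eqxx.
have IH' : (1 - x) ^+ n * (nsat T)%:R <= (nsat (T :|: U :\ u))%:R.
  apply: IH U'n (disjointWr (subD1set U u) TU) _ => T' u' T'sub /setD1P [_ u'U].
  exact: viol_le (subset_trans T'sub sub') u'U.
have := viol_le _ _ sub' uU uTU'.
have /(congr1 (fun m => m%:R : R)) := nsat_setU1 u (T :|: U :\ u).
rewrite natrD setUCA setD1K // exprS -mulrA => split_u.
have : (1 - x) * ((1 - x) ^+ n * (nsat T)%:R) <= (1 - x) * (nsat (T :|: U :\ u))%:R.
  by apply: ler_wpM2l IH'; rewrite subr_ge0.
lra.
Qed.

Lemma max_degree_gt0 (V : finType) (C : cnf V) k d c :
  (0 < k)%N -> k_uniform k C -> max_degree_le d C -> c \in C -> (0 < d)%N.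
Proof.
move=> k_gt0 k_unif deg_le cC.
have /card_gt0P [v vc] : (0 < #|cvars c|)%N by rewrite (k_unif c cC).
by apply: leq_trans (deg_le v); apply/card_gt0P; exists c; rewrite inE cC.
Qed.

Section LocalLemma.
Variables (R : realFieldType) (V : finType) (C : cnf V) (k d : nat).
Hypotheses (k_gt0 : (0 < k)%N) (k_unif : k_uniform k C) (deg_le : max_degree_le d C).
Hypothesis kd_le : (4 * k * d <= 2 ^ k)%N.
Implicit Types (T : cnf V) (c : clause V).

(* The local lemma is run with x = 2^(1-k): among the assignments satisfying
   the clauses variable-disjoint from c, a fraction 2^-k violates c, and
   imposing the at most kd other clauses loses at most a factor
   (1 - x)^(kd) >= 1/2. *)
Let x : R := 2 / (2 ^ k)%:R.

Let pow2k_gt0 : 0 < (2 ^ k)%:R :> R.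
Proof. by rewrite ltr0n expn_gt0. Qed.

Let kdx_le_half : (k * d)%:R * x <= 1 / 2.
Proof.
rewrite /x mulrA ler_pdivrMr // natrM.
have := kd_le; rewrite -(ler_nat R) !natrM; lra.
Qed.

Let x_le1 : x <= 1.
Proof. by rewrite /x ler_pdivrMr // mul1r ler_nat -{1}(expn1 2) leq_pexp2l. Qed.

Let half_le_expr m : (m <= k * d)%N -> 1 / 2 <= (1 - x) ^+ m.
Proof.
move=> m_le; apply: le_trans (bernoulli_le _ x_le1); rewrite -(ler_nat R) in m_le.
have : m%:R * x <= (k * d)%:R * x by rewrite ler_wpM2r // divr_ge0.
have := kdx_le_half; lra.
Qed.

Let x_le_half c : c \in C -> x <= 1 / 2.
Proof.
move=> cC; apply: le_trans kdx_le_half; rewrite ler_peMl ?divr_ge0 ?ler0n //.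
by rewrite natrM mulr_ege1 // ler1n ?k_gt0 // (max_degree_gt0 k_gt0 k_unif deg_le cC).
Qed.

Lemma nsat_viol_le T c : T \subset C -> c \in C -> c \notin T ->
  (nsat_viol T c)%:R <= x * (nsat T)%:R.
Proof.
move: {2}#|T|.+1 (ltnSn #|T|) => n; elim: n T c => [//|n IH] T c Tn TC cC cT.
set D := [set c' | [disjoint cvars c' & cvars c]].
have T_indep : (2 ^ k * nsat_viol (T :&: D) c)%N = nsat (T :&: D).
  by rewrite -(k_unif cC) nsat_viol_indep // => c'; rewrite !inE => /andP [].
have viol_TD : (nsat_viol T c <= nsat_viol (T :&: D) c)%N.
  by rewrite nsat_viol_subset // subsetIl.
have card_TD : (#|T :\: D| <= k * d)%N.
  rewrite -(k_unif cC); apply: card_cnf_meeting_le deg_le _ _.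
    by apply: subset_trans TC; apply: subsetDl.
  by move=> c'; rewrite !inE => /andP [/pred0Pn [v /andP [? ?]] _]; exists v.
have grow : (1 - x) ^+ #|T :\: D| * (nsat (T :&: D))%:R <= (nsat T)%:R.
  rewrite -[X in _ <= (nsat X)%:R](setID T D); apply: nsat_setU_ge.
  - exact: x_le1.
  - by rewrite disjoints_subset setCD (subset_trans (subsetIr T D)) // subsetUr.
  move=> T' u; rewrite setID => T'T /setDP [uT _] uT'.
  have T'T_proper : T' \proper T by apply/properP; split => //; exists u.
  apply: IH (subset_trans T'T TC) (subsetP TC u uT) uT'.
  by apply: leq_trans (proper_card T'T_proper) _; rewrite -ltnS.
rewrite -(ler_nat R) in viol_TD; move/(congr1 (fun m => m%:R : R)): T_indep.
rewrite natrM /x mulrAC ler_pdivlMr // => T_indep.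
have : 1 / 2 * (nsat (T :&: D))%:R <= (nsat T)%:R :> R.
  by apply: le_trans grow; rewrite ler_wpM2r // half_le_expr.
have : (nsat_viol T c)%:R * (2 ^ k)%:R
         <= (nsat_viol (T :&: D) c)%:R * (2 ^ k)%:R :> R.
  by rewrite ler_wpM2r // ltW.
lra.
Qed.

Lemma nsat_setD_le (S : cnf V) : S \subset C ->
  (nsat (C :\: S))%:R <= 2 ^+ #|S| * (nsat C)%:R :> R.
Proof.
move=> SC; have [-> | [c cS]] := set_0Vmem S; first by rewrite setD0 cards0 expr0 mul1r.
have x_le : x <= 1 / 2 := x_le_half (subsetP SC c cS).
have CE : C :\: S :|: S = C by rewrite setUC -{1}(setIidPr SC) setID.
have grow : (1 - x) ^+ #|S| * (nsat (C :\: S))%:R <= (nsat C)%:R.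
  rewrite -[X in _ <= (nsat X)%:R]CE; apply: nsat_setU_ge.
  - by lra.
  - by rewrite disjoint_sym disjoints_subset setCD subsetUr.
  by rewrite CE => T' u T'C /(subsetP SC) uC; apply: nsat_viol_le.
have half_pow : (1 / 2) ^+ #|S| <= (1 - x) ^+ #|S| by rewrite lerXn2r ?nnegrE; lra.
have := le_trans (ler_wpM2r (ler0n _ _) half_pow) grow.
move/(ler_wpM2l (exprn_ge0 #|S| (ler0n R 2))); apply: le_trans.
by rewrite mulrA -exprMn div1r mulfV ?pnatr_eq0 // expr1n mul1r.
Qed.

End LocalLemma.

Lemma sum_subset_expr (R : comPzSemiRingType) (T : finType) (A : {set T}) (y : R) :
  \sum_(S : {set T} | S \subset A) y ^+ #|S| = (1 + y) ^+ #|A|.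
Proof.
have := @bigA_distr R 0 1 *%R +%R _ (fun i => if i \in A then y else 0) (fun _ => 1).
rewrite (bigID (mem A)) /= (eq_bigr (fun _ => 1 + y)) => [|i ->]; last by rewrite addrC.
rewrite [X in _ * X = _]big1 ?mulr1 => [|i /negbTE ->]; last by rewrite add0r.
rewrite prodr_const => ->; rewrite big_mkcond; apply: eq_bigr => S _ /=.
case: ifP => [SA | /negbT /subsetPn [i iS iA]].
  rewrite -big_mkcond /= (eq_bigr (fun _ => y)) ?prodr_const // => i iS.
  by rewrite (subsetP SA i iS).
by rewrite (bigD1 i) //= iS (negbTE iA) mul0r.
Qed.

Section PartitionFunction.
Variables (R : realType) (V : finType) (C : cnf V).

Lemma nsat_le_Ztheta (theta : R) : (nsat C)%:R <= Ztheta C theta.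
Proof.
rewrite /nsat /Ztheta -sum1_card natr_sum big_mkcond /=.
apply: ler_sum => X _; rewrite inE; case: ifP => [sat_C|_]; last exact: expR_ge0.
suff -> : unsat_clauses C X = set0 by rewrite cards0 mulr0 expR0.
by apply/setP => c; rewrite !inE; case: (c \in C) (forall_inP sat_C c) => // ->.
Qed.

Lemma Ztheta_expand (theta : R) :
  Ztheta C theta = \sum_(S : cnf V | S \subset C)
    expR (- theta) ^+ #|S| * #|[set X | unsat_clauses C X == S]|%:R.
Proof.
rewrite /Ztheta (eq_bigr (fun X => \sum_(S : cnf V | S \subset C)
  (S == unsat_clauses C X)%:R * expR (- theta) ^+ #|S|)) => [|X _]; last first.
  rewrite (bigD1 (unsat_clauses C X)) ?unsat_clauses_sub //= eqxx mul1r expRM_natr.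
  by rewrite big1 ?addr0 // => S /andP [_ /negbTE ->]; rewrite mul0r.
rewrite exchange_big /=; apply: eq_bigr => S _.
rewrite -big_distrl /= mulrC; congr (_ * _).
rewrite -sum1_card natr_sum [RHS]big_mkcond /=.
by apply: eq_bigr => X _; rewrite !inE eq_sym; case: (_ == _).
Qed.

End PartitionFunction.

Lemma Ztheta_le (R : realType) (V : finType) (C : cnf V) k d (theta : R) :
  (0 < k)%N -> k_uniform k C -> max_degree_le d C -> (4 * k * d <= 2 ^ k)%N ->
  Ztheta C theta <= (1 + 2 * expR (- theta)) ^+ #|C| * (nsat C)%:R.
Proof.
move=> k_gt0 k_unif deg_le kd_le.
rewrite Ztheta_expand -sum_subset_expr mulr_suml; apply: ler_sum => S SC.
rewrite exprMn [2 ^+ _ * _]mulrC -mulrA ler_wpM2l ?exprn_ge0 ?expR_ge0 //.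
apply: le_trans (nsat_setD_le R k_gt0 k_unif deg_le kd_le SC).
by rewrite ler_nat card_unsat_clauses_eq_le.
Qed.

Lemma expr1D_le_expR (R : realType) (y : R) n :
  -1 <= y -> (1 + y) ^+ n <= expR (y * n%:R).
Proof.
by move=> y_ge; rewrite expRM_natr lerXn2r ?nnegrE ?expR_ge0 ?expR_ge1Dx //; lra.
Qed.

Lemma card_cnf_le (V : finType) (C : cnf V) k d :
  (0 < k)%N -> k_uniform k C -> max_degree_le d C -> (#|C| <= #|V| * d)%N.
Proof.
move=> k_gt0 k_unif deg_le; rewrite -cardsT.
apply: card_cnf_meeting_le deg_le (subxx C) _ => c cC.
have /card_gt0P [v vc] : (0 < #|cvars c|)%N by rewrite (k_unif c cC).
by exists v; rewrite ?in_setT.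
Qed.

Lemma ceil_ln_theta_bound (R : realType) (N m : nat) (eps : R) :
  0 < eps -> (m <= N)%N ->
  2 * expR (- (N%:R * (Num.ceil (ln (4 * N%:R / eps)))%:~R / N%:R)) * m%:R <= eps / 2.
Proof.
move=> eps_gt0 mN; set theta := _ / N%:R.
(* For N = 0, theta is 0 by the convention x / 0 = 0, but then m = 0 too. *)
have [N0 | N_gt0] := posnP N.
  by move: mN; rewrite N0 leqn0 => /eqP ->; rewrite mulr0 divr_ge0 ?ltW.
have N_gt0' : 0 < N%:R :> R by rewrite ltr0n.
have a_gt0 : 0 < 4 * N%:R / eps by rewrite divr_gt0 ?mulr_gt0.
have p_le : expR (- theta) <= eps / (4 * N%:R).
  rewrite /theta mulrAC divff ?mul1r ?gt_eqF //.
  apply: le_trans (_ : expR (- ln (4 * N%:R / eps)) <= _).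
    by rewrite ler_expR lerN2 ceil_ge.
  by rewrite expRN lnK ?posrE // invf_div.
have : expR (- theta) * m%:R <= expR (- theta) * N%:R.
  by rewrite ler_wpM2l ?expR_ge0 ?ler_nat.
move: p_le; rewrite ler_pdivlMr ?mulr_gt0 //; lra.
Qed.

Theorem lemma7p2 (R : realType) (V : finType) (C : cnf V) (k d : nat) (eps : R) :
  (0 < k)%N ->
  k_uniform k C ->
  max_degree_le d C ->
  0 < eps ->
  (2 ^ k)%:R >= 2 * expR 1 * d%:R * k%:R :> R ->
  let n := #|V| in
  let ell : R := (n * d)%:R * (Num.ceil (ln (4 * (n * d)%:R / eps)))%:~R in
  let theta : R := ell / (d * n)%:R in
  (nsat C)%:R <= Ztheta C theta /\ Ztheta C theta <= expR (eps / 2) * (nsat C)%:R.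
Proof.
move=> k_gt0 k_unif deg_le eps_gt0 two_e_dk_le n ell theta.
split; first exact: nsat_le_Ztheta.
have kd_le : (4 * k * d <= 2 ^ k)%N.
  have : 0 <= (expR 1 - 2) * (d%:R * k%:R) :> R.
    by rewrite mulr_ge0 // subr_ge0; have := expR_ge1Dx (1 : R); lra.
  by move: two_e_dk_le; rewrite -(ler_nat R) !natrM; lra.
apply: le_trans (Ztheta_le theta k_gt0 k_unif deg_le kd_le) _.
rewrite ler_wpM2r //; apply: le_trans (expr1D_le_expR _ _) _.
  by apply: le_trans (_ : 0 <= _); rewrite ?mulr_ge0 ?expR_ge0.
rewrite ler_expR /theta /ell [(d * n)%N]mulnC.
exact: ceil_ln_theta_bound eps_gt0 (card_cnf_le k_gt0 k_unif deg_le).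
Qed.
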